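(* Let $b(\lambda)=\frac14\lambda^4+\frac12p\lambda^2+q\lambda$ with $p<0$, $q\in\mathbb{R}$, let $b^*(\eta)=\sup_{\lambda}[\eta\lambda-b(\lambda)]$, and $A(x,r,\eta)=b(x)+b(r)-\eta(x+r)+2b^*(\eta)$. (1) If $x=\sqrt{-p}$, then for $\eta>q$, $A(x,x,\eta)\approx(\eta-q)^2(1+|\eta|)^{-2/3}$. (2) If $x=-\sqrt{-p}$, then for $\eta<q$, $A(x,x,\eta)\approx(\eta-q)^2(1+|\eta|)^{-2/3}$.
   Context: $X\approx Y$ means $cY\le X\le c^{-1}Y$ for some $c>0$ independent of $\eta$ (it may depend on $p,q$). *)

From mathcomp Require Import all_boot all_order all_algebra.
From mathcomp Require Import all_classical all_reals all_analysis.
Set Implicit Arguments. Unset Strict Implicit. Unset Printing Implicit Defensive.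
Import Order.TTheory GRing.Theory Num.Theory.
Local Open Scope classical_set_scope.
Local Open Scope ring_scope.

Definition bfun (R : realType) (p q l : R) : R :=
  l ^+ 4 / 4 + p * l ^+ 2 / 2 + q * l.

Definition bstar (R : realType) (p q eta : R) : R :=
  sup [set eta * l - bfun p q l | l in [set: R]].

Definition Afun (R : realType) (p q x r eta : R) : R :=
  bfun p q x + bfun p q r - eta * (x + r) + 2 * bstar p q eta.

Definition weight (R : realType) (q eta : R) : R :=
  (eta - q) ^+ 2 * powR (1 + `|eta|) (- (2 / 3)).

From mathcomp Require Import all_boot all_order all_algebra.
From mathcomp Require Import all_classical all_reals all_analysis.
From mathcomp Require Import ring lra.
Import Order.TTheory GRing.Theory Num.Theory.
Set Implicit Arguments. Unset Strict Implicit.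
Local Open Scope ring_scope.

(* At the well s = sqrt(-p) we have b'(s) = q, and b(s + u) = b(s) + q u + g(u)
   with g(u) = u^2 (u + 2s)^2 / 4.  Hence A(s, s, eta) / 2 is the Legendre
   transform of g at d = eta - q.  Since g(u) is comparable to s^2 u^2 for small
   u and to u^4 / 4 for large u, its transform is comparable to d^2 / s^2 for
   bounded d and to d^(4/3) for large d; both regimes are captured, up to
   constants depending on p and q, by d^2 (1 + |eta|)^(-2/3).  The well -s is
   reduced to the well s by the reflection l |-> -l, which changes (q, eta)
   into (-q, -eta). *)

Section WellGap.
Variables (R : realFieldType) (s : R).

Definition well_gap (u : R) : R := u ^+ 2 * (u + 2 * s) ^+ 2 / 4.

Lemma well_gap_ge0 (u : R) : 0 <= well_gap u.
Proof. by rewrite /well_gap divr_ge0 // mulr_ge0 // sqr_ge0. Qed.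

Lemma well_gap_ge_quadratic (u : R) : 0 < s -> 0 <= u -> s ^+ 2 * u ^+ 2 <= well_gap u.
Proof.
move=> s0 u0; have h : (2 * s) ^+ 2 <= (u + 2 * s) ^+ 2 by rewrite lerXn2r ?nnegrE //; lra.
have := ler_wpM2l (sqr_ge0 u) h; rewrite /well_gap; lra.
Qed.

Lemma well_gap_ge_quartic (u : R) : 0 <= s -> 0 <= u -> u ^+ 4 / 4 <= well_gap u.
Proof.
move=> s0 u0; have h : u ^+ 2 <= (u + 2 * s) ^+ 2 by rewrite lerXn2r ?nnegrE //; lra.
rewrite /well_gap ler_pM2r ?invr_gt0 // (_ : u ^+ 4 = u ^+ 2 * u ^+ 2); last by ring.
by rewrite ler_wpM2l ?sqr_ge0.
Qed.

Lemma well_gap_conj_le0 (d u : R) : 0 <= d -> u <= 0 -> d * u - well_gap u <= 0.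
Proof. by move=> d0 u0; have := well_gap_ge0 u; have := mulr_ge0_le0 d0 u0; lra. Qed.

Lemma well_gap_conj_le_quadratic (d u : R) :
  0 < s -> 0 <= d -> d * u - well_gap u <= d ^+ 2 / (4 * s ^+ 2).
Proof.
move=> s0 d0; have s20 : 0 < 4 * s ^+ 2 by rewrite mulr_gt0 // exprn_gt0.
rewrite ler_pdivlMr //.
have [u0|u0] := ltP u 0.
  by apply: le_trans (sqr_ge0 d); rewrite pmulr_lle0 // well_gap_conj_le0 // ltW.
have := well_gap_ge_quadratic s0 u0; have := sqr_ge0 (2 * s ^+ 2 * u - d); nra.
Qed.

Lemma well_gap_conj_le_quartic (d t u : R) :
  0 <= s -> 0 < t -> t ^+ 3 <= 2 * d -> d <= 2 * t ^+ 3 ->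
  d * u - well_gap u <= 4 * (d ^+ 2 / t ^+ 2).
Proof.
move=> s0 t0 td dt; have t20 : 0 < t ^+ 2 by rewrite exprn_gt0.
have d0 : 0 <= d by have := exprn_gt0 3 t0; lra.
rewrite mulrA ler_pdivlMr //.
have [u0|u0] := ltP u 0.
  suff : (d * u - well_gap u) * t ^+ 2 <= 0 by have := sqr_ge0 d; lra.
  by rewrite pmulr_lle0 // well_gap_conj_le0 // ltW.
have [ut|ut] := leP (u * t ^+ 2) (4 * d).
  have := ler_wpM2l d0 ut; have := mulr_ge0 (well_gap_ge0 u) (ltW t20); lra.
have u2t : 2 * t < u by nra.
have u3 : 4 * d <= u ^+ 3.
  have : (2 * t) ^+ 3 <= u ^+ 3 by rewrite lerXn2r ?nnegrE //; lra.
  lra.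
have := well_gap_ge_quartic s0 u0; nra.
Qed.

Lemma well_gap_conj_ge (a v t : R) :
  0 < a -> 0 <= v -> a * (a * v + 2 * s) ^+ 2 <= t ^+ 2 ->
  3 / 4 * (a * v ^+ 2 * t ^+ 2) <= (v * t ^+ 2) * (a * v) - well_gap (a * v).
Proof.
move=> a0 v0 h.
have -> : well_gap (a * v) = a * v ^+ 2 * (a * (a * v + 2 * s) ^+ 2) / 4.
  by rewrite /well_gap; field.
have := ler_wpM2l (mulr_ge0 (ltW a0) (sqr_ge0 v)) h; lra.
Qed.

(* Below, [t] stands for (1 + |eta|)^(1/3) and [K] for |q|. *)
Lemma well_gap_conj_le (d t K u : R) : 0 < s -> 0 < d -> 1 <= t -> 0 <= K ->
  t ^+ 3 <= 1 + K + d -> d <= t ^+ 3 + K ->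
  d * u - well_gap u <= (4 + (1 + K) ^+ 2 / s ^+ 2) * (d ^+ 2 / t ^+ 2).
Proof.
move=> s0 d0 t1 K0 h1 h2.
have t20 : 0 < t ^+ 2 by rewrite exprn_gt0 //; lra.
have w0 : 0 <= d ^+ 2 / t ^+ 2 by rewrite divr_ge0 ?sqr_ge0 // ltW.
have c0 : 0 <= (1 + K) ^+ 2 / s ^+ 2 by rewrite divr_ge0 ?sqr_ge0.
have [small|large] := leP (t ^+ 3) (2 * (1 + K)).
  have tt : t ^+ 2 <= (2 * (1 + K)) ^+ 2.
    by rewrite lerXn2r ?nnegrE //; nra.
  have := well_gap_conj_le_quadratic u s0 (ltW d0).
  suff : d ^+ 2 / (4 * s ^+ 2) <= (1 + K) ^+ 2 / s ^+ 2 * (d ^+ 2 / t ^+ 2).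
    by have := w0; lra.
  have -> : (1 + K) ^+ 2 / s ^+ 2 * (d ^+ 2 / t ^+ 2)
          = d ^+ 2 / (4 * s ^+ 2) * ((2 * (1 + K)) ^+ 2 / t ^+ 2).
    by field; rewrite !gt_eqF ?exprn_gt0 //; lra.
  have q0 : 0 <= d ^+ 2 / (4 * s ^+ 2) by rewrite divr_ge0 ?sqr_ge0 // mulr_ge0 // sqr_ge0.
  by rewrite ler_peMr // ler_pdivlMr // mul1r.
have td : t ^+ 3 <= 2 * d by lra.
have dt : d <= 2 * t ^+ 3 by lra.
have := well_gap_conj_le_quartic u (ltW s0) (lt_le_trans ltr01 t1) td dt.
have := mulr_ge0 c0 w0; lra.
Qed.

Lemma well_gap_conj_ge_witness (d t K : R) : 0 < s -> 0 <= d -> 1 <= t -> 0 <= K ->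
  d <= t ^+ 3 + K ->
  exists u, 3 / 4 * (1 + K + 2 * s) ^- 2 * (d ^+ 2 / t ^+ 2) <= d * u - well_gap u.
Proof.
move=> s0 d0 t1 K0 h2.
set L := 1 + K + 2 * s; set v := d / t ^+ 2.
have t20 : 0 < t ^+ 2 by rewrite exprn_gt0 //; lra.
have L20 : 0 < L ^+ 2 by rewrite exprn_gt0 // /L; lra.
have a0 : 0 < L ^- 2 by rewrite invr_gt0.
have a1 : L ^- 2 <= 1 by rewrite invf_le1 // /L; nra.
have v0 : 0 <= v by rewrite divr_ge0 // ltW.
have dv : d = v * t ^+ 2 by rewrite /v divfK // gt_eqF.
have hv : v <= (1 + K) * t.
  rewrite /v ler_pdivrMr // -mulrA -exprS.
  have : K * 1 <= K * t ^+ 3 by rewrite ler_wpM2l // exprn_ege1.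
  lra.
have hb : L ^- 2 * v + 2 * s <= L * t by rewrite /L; nra.
have hsq : (L ^- 2 * v + 2 * s) ^+ 2 <= (L * t) ^+ 2.
  by rewrite lerXn2r ?nnegrE //; nra.
have hk : L ^- 2 * (L ^- 2 * v + 2 * s) ^+ 2 <= t ^+ 2.
  move: hsq => /(ler_wpM2l (ltW a0)).
  by rewrite exprMn [X in _ <= X]mulrA mulVf ?mul1r // gt_eqF.
(* The witness is small enough that its gap is at most a quarter of [d * u]. *)
exists (L ^- 2 * v); rewrite [in X in X <= _]dv.
have -> : 3 / 4 * L ^- 2 * ((v * t ^+ 2) ^+ 2 / t ^+ 2) = 3 / 4 * (L ^- 2 * v ^+ 2 * t ^+ 2).
  by field; rewrite !gt_eqF // ?(lt_le_trans ltr01 t1) // /L; lra.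
by rewrite dv; apply: well_gap_conj_ge.
Qed.

End WellGap.

Lemma bfun_well_shift (R : realType) (p q eta s l : R) : s ^+ 2 = - p ->
  eta * l - bfun p q l
  = (eta * s - bfun p q s) + (eta - q) * (l - s) - well_gap s (l - s).
Proof.
move=> hs; have -> : p = - s ^+ 2 by rewrite hs opprK.
by rewrite /bfun /well_gap; field.
Qed.

Lemma Afun_well_le (R : realType) (p q eta s B : R) : s ^+ 2 = - p ->
  (forall u, (eta - q) * u - well_gap s u <= B) -> Afun p q s s eta <= 2 * B.
Proof.
move=> hs hB.
suff : bstar p q eta <= (eta * s - bfun p q s) + B by rewrite /Afun; lra.
apply: ge_sup; first by exists (eta * 0 - bfun p q 0), 0.
move=> _ [l _ <-]; rewrite (bfun_well_shift _ _ _ hs).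
by have := hB (l - s); lra.
Qed.

Lemma Afun_well_ge (R : realType) (p q eta s B u : R) : s ^+ 2 = - p ->
  (forall u, (eta - q) * u - well_gap s u <= B) ->
  2 * ((eta - q) * u - well_gap s u) <= Afun p q s s eta.
Proof.
move=> hs hB.
suff : (eta * s - bfun p q s) + ((eta - q) * u - well_gap s u) <= bstar p q eta.
  by rewrite /Afun; lra.
have -> : (eta * s - bfun p q s) + ((eta - q) * u - well_gap s u)
        = eta * (s + u) - bfun p q (s + u).
  by rewrite [RHS](bfun_well_shift _ _ _ hs) (addrC s u) addrK addrA.
apply: ub_le_sup; last by exists (s + u).
exists ((eta * s - bfun p q s) + B) => _ [l _ <-].
by rewrite (bfun_well_shift _ _ _ hs); have := hB (l - s); lra.
Qed.

Lemma bfunN (R : realType) (p q l : R) : bfun p q (- l) = bfun p (- q) l.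
Proof. by rewrite /bfun; ring. Qed.

Lemma bstarN (R : realType) (p q eta : R) : bstar p q eta = bstar p (- q) (- eta).
Proof.
rewrite /bstar; congr sup; apply/seteqP; split=> _ [l _ <-].
  by exists (- l) => //; rewrite bfunN opprK mulrNN.
by exists (- l) => //; rewrite bfunN mulrN mulNr.
Qed.

Lemma AfunN (R : realType) (p q x r eta : R) :
  Afun p q (- x) (- r) eta = Afun p (- q) x r (- eta).
Proof. by rewrite /Afun !bfunN bstarN -opprD mulrN mulNr. Qed.

Lemma weightN (R : realType) (q eta : R) : weight q eta = weight (- q) (- eta).
Proof. by rewrite /weight normrN -opprD sqrrN. Qed.

Lemma cbrtK (R : realType) (x : R) : 0 <= x -> (x `^ 3^-1) ^+ 3 = x.
Proof.
by move=> x0; rewrite -powR_mulrn ?powR_ge0 // -powRrM mulVf ?powRr1 // pnatr_eq0.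
Qed.

Lemma weightE (R : realType) (q eta : R) :
  weight q eta = (eta - q) ^+ 2 / ((1 + `|eta|) `^ 3^-1) ^+ 2.
Proof.
rewrite /weight powRN; congr (_ * _^-1).
by rewrite -powR_mulrn ?powR_ge0 // -powRrM mulrC.
Qed.

Lemma Afun_right_well_approx (R : realType) (p q : R) : p < 0 ->
  exists c : R, 0 < c /\
    forall eta : R, q < eta ->
      c * weight q eta <= Afun p q (Num.sqrt (- p)) (Num.sqrt (- p)) eta
      <= c^-1 * weight q eta.
Proof.
move=> hp; set s := Num.sqrt (- p).
have s0 : 0 < s by rewrite sqrtr_gt0 oppr_gt0.
have hs : s ^+ 2 = - p by rewrite sqr_sqrtr // oppr_ge0 ltW.
set K := `|q|; have K0 : 0 <= K := normr_ge0 q.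
set C := 4 + (1 + K) ^+ 2 / s ^+ 2; set a := 3 / 4 * (1 + K + 2 * s) ^- 2.
have a0 : 0 < a by rewrite mulr_gt0 // invr_gt0 exprn_gt0 //; lra.
have C0 : 0 <= C by rewrite /C addr_ge0 // divr_ge0 ?sqr_ge0.
have ai0 : 0 < a^-1 by rewrite invr_gt0.
exists (a^-1 + 2 * C)^-1; split; first by rewrite invr_gt0; lra.
move=> eta lt_q_eta; rewrite invrK weightE.
set d := eta - q; set t := (1 + `|eta|) `^ 3^-1.
have d0 : 0 < d by rewrite subr_gt0.
have t3 : t ^+ 3 = 1 + `|eta| by rewrite cbrtK // addr_ge0 // normr_ge0.
have t1 : 1 <= t.
  have t0 : 0 <= t := powR_ge0 _ _.
  have : 1 <= t ^+ 3 by rewrite t3 lerDl normr_ge0.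
  nra.
have h1 : t ^+ 3 <= 1 + K + d.
  have := ler_normD q d; rewrite (gtr0_norm d0) t3 /d /K addrC subrK; lra.
have h2 : d <= t ^+ 3 + K.
  have := ler_normB eta q; rewrite -/d -/K (gtr0_norm d0) t3; lra.
set w := d ^+ 2 / t ^+ 2; have w0 : 0 <= w by rewrite divr_ge0 ?sqr_ge0.
have conj_le u : d * u - well_gap s u <= C * w by exact: well_gap_conj_le.
have [u conj_ge] := well_gap_conj_ge_witness s0 (ltW d0) t1 K0 h2.
have A_ge := Afun_well_ge u hs conj_le; have A_le := Afun_well_le hs conj_le.
have ca : (a^-1 + 2 * C)^-1 <= a by rewrite -[leRHS]invrK lef_pV2 ?posrE; lra.
rewrite -/d in A_ge; rewrite -/w -/a in conj_ge.
apply/andP; split; last by have := mulr_ge0 (ltW ai0) w0; lra.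
by have := ler_wpM2r w0 ca; have := mulr_ge0 (ltW a0) w0; lra.
Qed.

Theorem proposition6p3 (R : realType) (p q : R) (hp : p < 0) :
  (exists c : R, 0 < c /\
     forall eta : R, q < eta ->
       c * weight q eta <= Afun p q (Num.sqrt (- p)) (Num.sqrt (- p)) eta
       <= c^-1 * weight q eta)
  /\
  (exists c : R, 0 < c /\
     forall eta : R, eta < q ->
       c * weight q eta <= Afun p q (- Num.sqrt (- p)) (- Num.sqrt (- p)) eta
       <= c^-1 * weight q eta).
Proof.
split; first exact: Afun_right_well_approx.
have [c [c0 hc]] := Afun_right_well_approx (- q) hp.
exists c; split => // eta lt_eta_q.
by rewrite AfunN weightN; apply: hc; rewrite ltrN2.
Qed.
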